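(* Let $\mathfrak{A}$ be a finite-dimensional alternative $\mathbb{Q}$-algebra with radical $\mathfrak{R}$, so that $\mathfrak{A}\cong\mathfrak{S}\oplus\mathfrak{R}$ with $\mathfrak{S}$ a semisimple subalgebra. If $\mathfrak{A}$ has the hyperbolic property, then $\mathfrak{R}$ is $2$-nilpotent (i.e. $\mathfrak{R}^2=0$), and there exists $j_0\in\mathfrak{R}$ with $j_0^2=0$ such that $\mathfrak{R}=\mathbb{Q}j_0$ is the $\mathbb{Q}$-linear span of $j_0$.
   Context: An algebra is alternative if $(xx)y=x(xy)$ and $(yx)x=y(xx)$ for all $x,y$. A $\mathbb{Z}$-order of a finite-dimensional $\mathbb{Q}$-algebra $\mathfrak{A}$ is a unital subring $\Gamma$ that is finitely generated as a $\mathbb{Z}$-module and spans $\mathfrak{A}$ over $\mathbb{Q}$; its units (elements with a two-sided inverse in $\Gamma$) form a loop $\mathcal{U}(\Gamma)$ under multiplication. A loop has the hyperbolic property if it contains no subgroup isomorphic to the free abelian group $\mathbb{Z}^2$ of rank two. The algebra $\mathfrak{A}$ has the hyperbolic property if there exists a $\mathbb{Z}$-order $\Gamma\subset\mathfrak{A}$ whose unit loop $\mathcal{U}(\Gamma)$ has the hyperbolic property. *)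

(* Finite-dimensional (unital, nonassociative) Q-algebras are
   modelled as a finite-dimensional Q-vector space V (vectType rat) with a
   bilinear multiplication mul and an identity element one. *)
From HB Require Import structures.
From mathcomp Require Import all_boot all_order all_algebra.
Set Implicit Arguments.
Unset Strict Implicit.
Unset Printing Implicit Defensive.
Import GRing.Theory.
Local Open Scope ring_scope.

Section NonassocAlgebra.
Variables (V : vectType rat) (mul : V -> V -> V) (one : V).

Definition bilinear_mul : Prop :=
  (forall (a : rat) (x y z : V), mul (a *: x + y) z = a *: mul x z + mul y z) /\
  (forall (a : rat) (x y z : V), mul z (a *: x + y) = a *: mul z x + mul z y).

Definition unital_mul : Prop := forall x : V, mul one x = x /\ mul x one = x.

Definition alternative_mul : Prop :=
  forall x y : V, mul (mul x x) y = mul x (mul x y) /\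
                  mul (mul y x) x = mul y (mul x x).

Definition is_ideal (I : V -> Prop) : Prop :=
  I 0 /\ (forall (a : rat) (x y : V), I x -> I y -> I (a *: x + y)) /\
  (forall a x : V, I x -> I (mul a x) /\ I (mul x a)).

Inductive ideal_prod (I : V -> Prop) : nat -> V -> Prop :=
  | ip_base x : I x -> ideal_prod I 1 x
  | ip_mul i j x y : ideal_prod I i x -> ideal_prod I j y ->
                     ideal_prod I (i + j) (mul x y).

(* nilpotent ideal: I^n = 0 for some n >= 1, where I^n is spanned by all
   products of n elements of I (in all bracketings) *)
Definition nilpotent_ideal (I : V -> Prop) : Prop :=
  is_ideal I /\ exists n : nat, (0 < n)%N /\ forall x, ideal_prod I n x -> x = 0.

(* the (nilpotent) radical: union of all nilpotent ideals, which in a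
   finite-dimensional alternative algebra is the largest nilpotent ideal *)
Definition in_radical (x : V) : Prop :=
  exists I : V -> Prop, nilpotent_ideal I /\ I x.

Definition Z_order (G : V -> Prop) : Prop :=
  G one /\ (forall x y, G x -> G y -> G (x - y) /\ G (mul x y)) /\
  exists s : seq V,
    (forall v, G v <-> exists z : 'I_(size s) -> int,
                         v = \sum_(i < size s) s`_i *~ z i) /\
    (<<s>>%VS = fullv).

Definition unit_of_order (G : V -> Prop) (u : V) : Prop :=
  G u /\ exists v, G v /\ mul u v = one /\ mul v u = one.

(* the unit loop of G contains no subgroup isomorphic to Z^2, i.e. there is
   no injective homomorphism Z^2 -> U(G) *)
Definition loop_hyperbolic (G : V -> Prop) : Prop :=
  ~ exists phi : int * int -> V,
      injective phi /\ (forall a, unit_of_order G (phi a)) /\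
      (forall a b : int * int,
         phi (a.1 + b.1, a.2 + b.2) = mul (phi a) (phi b)).

Definition algebra_hyperbolic : Prop :=
  exists G : V -> Prop, Z_order G /\ loop_hyperbolic G.

End NonassocAlgebra.

From HB Require Import structures.
From mathcomp Require Import all_boot all_order all_algebra.
From mathcomp Require Import ring zify.
From Stdlib Require Import Classical.
Set Implicit Arguments. Unset Strict Implicit.
Import GRing.Theory.
Local Open Scope ring_scope.

(* If u, z are linearly independent, u^2 is a multiple of z and
   z^2 = uz = zu = 0, then after scaling u, z into a Z-order, the maps
   (a, b) |-> 1 + 2a u + 2a(a-1) u^2 + b z embed Z^2 into its unit loop (a
   discrete "exponential" of the square-zero-modulo-z element u).  Hence in a
   hyperbolic algebra such pairs are dependent.  In a nilpotent ideal, a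
   nonzero product z of maximal length k >= 2 splits as a product with a
   factor w of length >= k/2; then (w, z) or (w^2, z) is such a pair, so
   every nilpotent ideal squares to zero and is at most one-dimensional.
   Finally two independent radical elements x, y would have xy = yx = 0
   (xy lies in both of their nilpotent ideals), contradicting the same fact. *)

Section Independence.
Variable V : vectType rat.

Definition independent2 (w z : V) : Prop :=
  forall a b : rat, a *: w + b *: z = 0 -> a = 0 /\ b = 0.

Lemma independent2_neq0 w z : independent2 w z -> w <> 0 /\ z <> 0.
Proof.
move=> ind; split=> [w0|z0].
  have := ind 1 0; rewrite w0 scaler0 scale0r addr0 => /(_ erefl) [/eqP].
  by rewrite oner_eq0.
have := ind 0 1; rewrite z0 scaler0 scale0r addr0 => /(_ erefl) [_ /eqP].
by rewrite oner_eq0.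
Qed.

Lemma dependent_scalar_multiple w z :
  z <> 0 -> ~ independent2 w z -> exists c : rat, w = c *: z.
Proof.
move=> z0 dep; apply: NNPP => nomult; apply: dep => a b E.
have [a0|a_neq0] := eqVneq a 0.
  subst a; move: E; rewrite scale0r add0r => /eqP; rewrite scaler_eq0.
  by case/orP => /eqP.
case: nomult; exists (- b / a); apply: (scalerI a_neq0).
rewrite scalerA mulrCA mulfV // mulr1 scaleNr.
by apply/eqP; rewrite -addr_eq0 E.
Qed.

Lemma independent2_of_not_multiple w z :
  z <> 0 -> (forall c : rat, w <> c *: z) -> independent2 w z.
Proof.
move=> z0 nomult; apply: NNPP => dep.
by have [c] := dependent_scalar_multiple z0 dep; apply: nomult.
Qed.

Lemma line_of_pairwise_dependent (P : V -> Prop) :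
  P 0 -> (forall (q : rat) x, P x -> P (q *: x)) ->
  (forall x y, P x -> P y -> ~ independent2 x y) ->
  exists j, P j /\ forall x, P x <-> exists q : rat, x = q *: j.
Proof.
move=> P0 PZ Pdep.
case: (classic (exists j, P j /\ j <> 0)) => [[j [Pj j0]] | P_eq0].
  exists j; split=> // x; split=> [Px | [q ->]]; last exact: PZ.
  exact: dependent_scalar_multiple j0 (Pdep x j Px Pj).
exists 0; split=> // x; split=> [Px | [q ->]]; last by rewrite scaler0.
by exists 0; rewrite scaler0; apply: NNPP => x0; apply: P_eq0; exists x.
Qed.

End Independence.

Lemma exists_maximal (P : nat -> Prop) m n :
  P m -> (forall k, P k -> (k < n)%N) ->
  exists k, (m <= k)%N /\ P k /\ forall k', (k < k')%N -> ~ P k'.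
Proof.
move=> Pm bound.
suff: forall d m, (n - m <= d)%N -> P m ->
    exists k, (m <= k)%N /\ P k /\ forall k', (k < k')%N -> ~ P k'.
  by apply.
elim=> [|d IH] {}m hd {}Pm; first by have := bound m Pm; lia.
case: (classic (exists k', (m < k')%N /\ P k')) => [[k' [mk' Pk']] | none].
  have := bound k' Pk' => k'n.
  have [k [k'k maxk]] := IH k' ltac:(lia) Pk'.
  by exists k; split; [lia | exact: maxk].
by exists m; split=> //; split=> // k' mk' Pk'; apply: none; exists k'.
Qed.

Section Bilinear.
Variables (V : vectType rat) (mul : V -> V -> V).
Hypothesis hB : bilinear_mul mul.

Lemma bmulDl x y z : mul (x + y) z = mul x z + mul y z.
Proof. by have := (proj1 hB) 1 x y z; rewrite !scale1r. Qed.

Lemma bmulDr x y z : mul z (x + y) = mul z x + mul z y.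
Proof. by have := (proj2 hB) 1 x y z; rewrite !scale1r. Qed.

Lemma bmul0l z : mul 0 z = 0.
Proof. by apply: (addrI (mul 0 z)); rewrite -bmulDl !addr0. Qed.

Lemma bmul0r z : mul z 0 = 0.
Proof. by apply: (addrI (mul z 0)); rewrite -bmulDr !addr0. Qed.

Lemma bmulZl a x z : mul (a *: x) z = a *: mul x z.
Proof. by have := (proj1 hB) a x 0 z; rewrite !addr0 bmul0l addr0. Qed.

Lemma bmulZr a x z : mul z (a *: x) = a *: mul z x.
Proof. by have := (proj2 hB) a x 0 z; rewrite !addr0 bmul0r addr0. Qed.

End Bilinear.

Section Order.
Variables (V : vectType rat) (mul : V -> V -> V) (one : V) (G : V -> Prop).
Hypothesis hG : Z_order mul one G.

Lemma order1 : G one.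
Proof. by case: hG. Qed.

Lemma orderB x y : G x -> G y -> G (x - y).
Proof. by case: hG => _ [closed _] Gx Gy; case: (closed x y Gx Gy). Qed.

Lemma orderM x y : G x -> G y -> G (mul x y).
Proof. by case: hG => _ [closed _] Gx Gy; case: (closed x y Gx Gy). Qed.

Lemma order0 : G 0.
Proof. by rewrite -(subrr one); apply: orderB; apply: order1. Qed.

Lemma orderN x : G x -> G (- x).
Proof. by move=> Gx; rewrite -sub0r; apply: orderB => //; apply: order0. Qed.

Lemma orderD x y : G x -> G y -> G (x + y).
Proof. by move=> Gx Gy; rewrite -(opprK y); apply: orderB => //; apply: orderN. Qed.

Lemma orderMn x k : G x -> G (x *+ k).
Proof.
move=> Gx; elim: k => [|k IH]; first by rewrite mulr0n; apply: order0.
by rewrite mulrS; apply: orderD.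
Qed.

Lemma orderZint (n : int) x : G x -> G (n%:~R *: x).
Proof.
move=> Gx; rewrite scaler_int; case: n => k; first exact: orderMn.
by rewrite NegzE mulrNz; apply: orderN; apply: orderMn.
Qed.

Lemma order_sum_int_multiple n (c : 'I_n -> rat) (f : 'I_n -> V) :
  (forall i, G (f i)) -> exists N : int, N != 0 /\ G (N%:~R *: \sum_i c i *: f i).
Proof.
elim: n c f => [|n IH] c f Gf.
  by exists 1; split=> //; rewrite big_ord0 scaler0; apply: order0.
have [N [N0 GN]] := IH (fun i => c (widen_ord (leqnSn n) i))
                       (fun i => f (widen_ord (leqnSn n) i)) (fun i => Gf _).
exists (N * denq (c ord_max)); split; first by rewrite mulf_neq0 // denq_neq0.
rewrite big_ord_recr /= scalerDr; apply: orderD.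
  by rewrite rmorphM /= mulrC -scalerA; apply: orderZint.
rewrite scalerA.
have -> : (N * denq (c ord_max))%:~R * c ord_max = (N * numq (c ord_max))%:~R :> rat.
  by rewrite !rmorphM /= numqE; ring.
exact: orderZint.
Qed.

Lemma order_int_multiple v : exists N : int, N != 0 /\ G (N%:~R *: v).
Proof.
case: hG => _ [_ [s [G_span span_full]]].
have v_span : v \in <<in_tuple s>>%VS by rewrite span_full memvf.
rewrite (coord_span v_span); apply: order_sum_int_multiple => i /=.
apply/G_span; exists (fun j => (j == i)%:Z).
rewrite (bigD1 i) //= eqxx mulr1z big1 ?addr0 // => j /negbTE ->.
by rewrite mulr0z.
Qed.

End Order.

Section NullPair.
Variables (V : vectType rat) (mul : V -> V -> V) (one : V).
Hypotheses (hB : bilinear_mul mul) (hU : unital_mul mul one).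
Variables (u z : V) (c : rat).
Hypotheses (uz_indep : independent2 u z) (uu : mul u u = c *: z)
  (zz : mul z z = 0) (uz : mul u z = 0) (zu : mul z u = 0).

Let L (a b : rat) := a *: u + b *: z.

Let mulL a b a' b' : mul (L a b) (L a' b') = L 0 (a * a' * c).
Proof.
rewrite /L !(bmulDl hB) !(bmulDr hB) !(bmulZl hB) !(bmulZr hB) uu uz zu zz.
by rewrite !scaler0 !addr0 scale0r add0r !scalerA.
Qed.

Let mul_oneL a b a' b' :
  mul (one + L a b) (one + L a' b') = one + L (a + a') (b + b' + a * a' * c).
Proof.
rewrite (bmulDl hB) !(bmulDr hB one) (proj1 (hU one)) (proj1 (hU _)) (proj2 (hU _)).
rewrite mulL /L !scalerDl !scale0r add0r -!addrA; congr (_ + _).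
rewrite [in LHS](addrCA (b' *: z)) [LHS]addrCA; do 2!congr (_ + _).
exact: addrCA.
Qed.

Let L_inj a b a' b' : L a b = L a' b' -> a = a' /\ b = b'.
Proof.
move/eqP; rewrite -subr_eq0 /L opprD addrACA -!scalerBl => /eqP /uz_indep.
by case=> /eqP; rewrite subr_eq0 => /eqP -> /eqP; rewrite subr_eq0 => /eqP ->.
Qed.

Definition null_pair_exp (p : int * int) : V :=
  one + L (2 * p.1)%:~R ((2 * p.1 * (p.1 - 1))%:~R * c + p.2%:~R).

Lemma null_pair_expD p q :
  null_pair_exp (p.1 + q.1, p.2 + q.2) = mul (null_pair_exp p) (null_pair_exp q).
Proof.
rewrite /null_pair_exp mul_oneL /=; congr (one + L _ _);
  rewrite ?rmorphD ?rmorphM ?rmorphB /=; ring.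
Qed.

Lemma null_pair_exp0 : null_pair_exp (0, 0) = one.
Proof. by rewrite /null_pair_exp /L /= !(mulr0, mul0r, add0r, scale0r) addr0. Qed.

Lemma null_pair_exp_inj : injective null_pair_exp.
Proof.
move=> [p1 p2] [q1 q2] /addrI /L_inj /= [/intr_inj eq1].
by move: eq1 => /eqP; rewrite (inj_eq (mulfI _)) // => /eqP <- /addrI /intr_inj <-.
Qed.

Variable G : V -> Prop.
Hypotheses (hG : Z_order mul one G) (Gu : G u) (Gz : G z).

Lemma null_pair_exp_in_order p : G (null_pair_exp p).
Proof.
have -> : null_pair_exp p = one + ((2 * p.1)%:~R *: u
    + (2 * p.1 * (p.1 - 1))%:~R *: mul u u + p.2%:~R *: z).
  by rewrite /null_pair_exp /L uu scalerA scalerDl !addrA.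
apply: (orderD hG (order1 hG)); apply: (orderD hG); last exact: (orderZint hG).
by apply: (orderD hG); apply: (orderZint hG) => //; apply: (orderM hG).
Qed.

Lemma null_pair_not_loop_hyperbolic : ~ loop_hyperbolic mul one G.
Proof.
case; exists null_pair_exp; split; first exact: null_pair_exp_inj.
split=> [p|]; last exact: null_pair_expD.
split; first exact: null_pair_exp_in_order.
exists (null_pair_exp (- p.1, - p.2)); split; first exact: null_pair_exp_in_order.
by rewrite -!null_pair_expD /= !subrr addNr addNr null_pair_exp0.
Qed.

End NullPair.

Section IdealProducts.
Variables (V : vectType rat) (mul : V -> V -> V) (I : V -> Prop).
Hypothesis hI : is_ideal mul I.

Lemma ideal_prod_mem k x : ideal_prod mul I k x -> I x.
Proof. by elim=> // i j x0 y _ Ix _ _; exact: (proj2 ((proj2 (proj2 hI)) y x0 Ix)). Qed.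

Lemma ideal_prod_gt0 k x : ideal_prod mul I k x -> (0 < k)%N.
Proof. by elim=> // i j x0 y _ ? _ ?; lia. Qed.

Lemma ideal_prod_split k x : (1 < k)%N -> ideal_prod mul I k x ->
  exists i j p q, k = (i + j)%N /\
    ideal_prod mul I i p /\ ideal_prod mul I j q /\ x = mul p q.
Proof. by move=> + Hx; case: Hx => [x0 _ //|i j p q Hp Hq _]; exists i, j, p, q. Qed.

(* Merging the leading factors of a product into one element of I. *)
Lemma ideal_prod_le m x k :
  ideal_prod mul I m x -> (0 < k)%N -> (k <= m)%N -> ideal_prod mul I k x.
Proof.
move=> Hx; elim: Hx k => [x0 Ix0|i j x0 y Hx IHx Hy IHy] k k_gt0 km.
  have -> : k = 1%N by lia.
  by constructor.
have := ideal_prod_gt0 Hx; have := ideal_prod_gt0 Hy => j_gt0 i_gt0.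
have [->|k_neq1] := eqVneq k 1%N.
  by constructor; exact: (proj2 ((proj2 (proj2 hI)) y x0 (ideal_prod_mem Hx))).
have -> : k = (minn i k.-1 + (k - minn i k.-1))%N by lia.
by apply: ip_mul; [apply: IHx | apply: IHy]; lia.
Qed.

End IdealProducts.

Section Hyperbolic.
Variables (V : vectType rat) (mul : V -> V -> V) (one : V).
Hypotheses (hB : bilinear_mul mul) (hU : unital_mul mul one)
  (hA : algebra_hyperbolic mul one).

Lemma hyperbolic_null_pair_dependent u z c :
  mul u u = c *: z -> mul z z = 0 -> mul u z = 0 -> mul z u = 0 ->
  ~ independent2 u z.
Proof.
move=> uu zz uz zu indep; case: hA => G [hG hH].
have [N [N0 GNu]] := order_int_multiple hG u.
have [M [M0 GMz]] := order_int_multiple hG z.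
have N0' : (N%:~R : rat) != 0 by rewrite intr_eq0.
have M0' : (M%:~R : rat) != 0 by rewrite intr_eq0.
have scaled_indep : independent2 (N%:~R *: u) (M%:~R *: z).
  move=> a b; rewrite !scalerA => /indep [/eqP aN0 /eqP bM0].
  by move: aN0 bM0; rewrite !mulf_eq0 (negbTE N0') (negbTE M0') !orbF => /eqP -> /eqP ->.
apply: (null_pair_not_loop_hyperbolic hB hU scaled_indep
  (c := N%:~R * N%:~R * c / M%:~R) _ _ _ _ hG GNu GMz hH);
  rewrite !(bmulZl hB) !(bmulZr hB) ?uu ?zz ?uz ?zu ?scaler0 // !scalerA.
by congr (_ *: _); field.
Qed.

Section NilpotentIdeal.
Variable I : V -> Prop.
Hypothesis hN : nilpotent_ideal mul I.

Lemma nilpotent_ideal_prod_eq0 :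
  exists n, forall m x, (n <= m)%N -> ideal_prod mul I m x -> x = 0.
Proof.
case: hN => _ [n [n_gt0 In0]]; exists n => m x nm Hx.
by apply: In0; apply: (ideal_prod_le (proj1 hN) Hx).
Qed.

(* A nonzero product z of maximal length k >= 2 is impossible: one of its two
   factors, w, has length >= k/2 and is not a multiple of z, and then either
   (w, z) or (w^2, z) is a pair forbidden by hyperbolicity. *)
Lemma maximal_ideal_prod_eq0 k z : (1 < k)%N -> ideal_prod mul I k z ->
  (forall k' y, (k < k')%N -> ideal_prod mul I k' y -> y = 0) -> z = 0.
Proof.
move=> k_gt1 Hz vanish; apply: NNPP => z0.
have vanish_mul a b x y : (k < a + b)%N ->
    ideal_prod mul I a x -> ideal_prod mul I b y -> mul x y = 0.
  by move=> kab Hx Hy; apply: (vanish (a + b)%N) => //; apply: ip_mul.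
have [i [j [p [q [kij [Hp [Hq zpq]]]]]]] := ideal_prod_split k_gt1 Hz.
have := ideal_prod_gt0 Hp; have := ideal_prod_gt0 Hq => j_gt0 i_gt0.
have [m [w [Hw [km not_mult]]]] : exists m w, ideal_prod mul I m w /\
    (k <= m + m)%N /\ forall c : rat, w <> c *: z.
  case: (leqP j i) => ji; [exists i, p | exists j, q]; do 2!split=> //; try lia.
    move=> c pc; apply: z0.
    by rewrite zpq pc (bmulZl hB) (vanish_mul k j z q) ?scaler0 //; lia.
  move=> c qc; apply: z0.
  by rewrite zpq qc (bmulZr hB) (vanish_mul i k p z) ?scaler0 //; lia.
have m_gt0 := ideal_prod_gt0 Hw.
have Hww := ip_mul Hw Hw.
have zz : mul z z = 0 by apply: (vanish_mul k k _ _ _ Hz Hz); lia.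
case: (classic (independent2 (mul w w) z)) => [ww_indep | ww_dep].
  apply: (hyperbolic_null_pair_dependent (c := 0) _ zz _ _ ww_indep).
  - by rewrite scale0r; apply: (vanish_mul _ _ _ _ _ Hww Hww); lia.
  - by apply: (vanish_mul _ _ _ _ _ Hww Hz); lia.
  - by apply: (vanish_mul _ _ _ _ _ Hz Hww); lia.
have [c ww] := dependent_scalar_multiple z0 ww_dep.
apply: (hyperbolic_null_pair_dependent ww zz _ _
          (independent2_of_not_multiple z0 not_mult)).
- by apply: (vanish_mul _ _ _ _ _ Hw Hz); lia.
- by apply: (vanish_mul _ _ _ _ _ Hz Hw); lia.
Qed.

Lemma nilpotent_ideal_mul0 u v : I u -> I v -> mul u v = 0.
Proof.
move=> Iu Iv; apply: NNPP => uv0.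
have [n In0] := nilpotent_ideal_prod_eq0.
pose nonzero_prod k := exists x, ideal_prod mul I k x /\ x <> 0.
have nonzero_prod2 : nonzero_prod 2.
  by exists (mul u v); split=> //; apply: (@ip_mul _ _ _ 1 1); constructor.
have nonzero_prod_lt k : nonzero_prod k -> (k < n)%N.
  by move=> [x [Hx x0]]; case: (ltnP k n) => // nk; case: x0; apply: (In0 k).
have [k [k_ge2 [[z [Hz z0]] maxk]]] := exists_maximal nonzero_prod2 nonzero_prod_lt.
apply: z0; apply: (maximal_ideal_prod_eq0 _ Hz) => // k' y kk' Hy.
by apply: NNPP => y0; apply: (maxk k' kk'); exists y.
Qed.

Lemma nilpotent_ideal_dependent u v : I u -> I v -> ~ independent2 u v.
Proof.
move=> Iu Iv; apply: (hyperbolic_null_pair_dependent (c := 0));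
  rewrite ?scale0r; exact: nilpotent_ideal_mul0.
Qed.

End NilpotentIdeal.

(* If x, y lie in nilpotent ideals I, J, then xy lies in I and J, hence is a
   multiple of both x and y; independence forces xy = 0, and likewise yx = 0. *)
Lemma radical_dependent x y :
  in_radical mul x -> in_radical mul y -> ~ independent2 x y.
Proof.
move=> [I [hNI Ix]] [J [hNJ Jy]] xy_indep.
have [x0 y0] := independent2_neq0 xy_indep.
have [_ [_ I_mul]] := proj1 hNI; have [_ [_ J_mul]] := proj1 hNJ.
have cross_eq0 t : I t -> J t -> t = 0.
  move=> It Jt.
  have [a ta] := dependent_scalar_multiple x0 (nilpotent_ideal_dependent hNI It Ix).
  have [b tb] := dependent_scalar_multiple y0 (nilpotent_ideal_dependent hNJ Jt Jy).
  have [a0 _] : a = 0 /\ - b = 0 by apply: xy_indep; rewrite -ta scaleNr -tb subrr.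
  by rewrite ta a0 scale0r.
apply: (hyperbolic_null_pair_dependent (c := 0) _ _ _ _ xy_indep).
- by rewrite scale0r; apply: (nilpotent_ideal_mul0 hNI).
- exact: (nilpotent_ideal_mul0 hNJ).
- by apply: cross_eq0; [apply: (I_mul y x Ix).2 | apply: (J_mul x y Jy).1].
- by apply: cross_eq0; [apply: (I_mul y x Ix).1 | apply: (J_mul x y Jy).2].
Qed.

Lemma radical_mul0 x y : in_radical mul x -> in_radical mul y -> mul x y = 0.
Proof.
move=> Rx Ry; case: (classic (y = 0)) => [->|y0]; first exact: (bmul0r hB).
have [c ->] := dependent_scalar_multiple y0 (radical_dependent Rx Ry).
have [J [hNJ Jy]] := Ry.
by rewrite (bmulZl hB) (nilpotent_ideal_mul0 hNJ Jy Jy) scaler0.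
Qed.

End Hyperbolic.

Lemma radical0 (V : vectType rat) (mul : V -> V -> V) :
  bilinear_mul mul -> in_radical mul 0.
Proof.
move=> hB; have hI : is_ideal mul (eq^~ 0).
  split=> //; split=> [a x y -> ->|a x ->]; first by rewrite scaler0 addr0.
  by rewrite (bmul0l hB) (bmul0r hB).
exists (eq^~ 0); split=> //; split=> //; exists 1%N; split=> // x.
exact: ideal_prod_mem.
Qed.

Lemma radicalZ (V : vectType rat) (mul : V -> V -> V) (q : rat) x :
  in_radical mul x -> in_radical mul (q *: x).
Proof.
move=> [I [hN Ix]]; exists I; split=> //.
have [I0 [IZD _]] := proj1 hN.
by have := IZD q x 0 Ix I0; rewrite addr0.
Qed.

Theorem proposition2p2 (V : vectType rat) (mul : V -> V -> V) (one : V) :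
  bilinear_mul mul -> unital_mul mul one -> alternative_mul mul ->
  algebra_hyperbolic mul one ->
  (forall x y : V, in_radical mul x -> in_radical mul y -> mul x y = 0) /\
  exists j0 : V, in_radical mul j0 /\ mul j0 j0 = 0 /\
    (forall x : V, in_radical mul x <-> exists q : rat, x = q *: j0).
Proof.
move=> hB hU _ hA; have R_mul0 := radical_mul0 hB hU hA.
split=> //.
have [j [Rj line]] := line_of_pairwise_dependent (radical0 hB)
  (@radicalZ _ mul) (radical_dependent hB hU hA).
by exists j; do 2!split=> //; apply: R_mul0.
Qed.
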